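(* Let $k_0>0$ and let $w\in C^2(\mathbb{R})$ be real-valued with $\lim_{x\to\pm\infty}w(x)=\mp k_0$, such that $U(x)=-w(x)^2-iw'(x)+k_0^2$ satisfies $\int_{\mathbb{R}}(1+|x|)|U(x)|\,dx<\infty$ and $w(x)\to\mp k_0$ fast enough that $\lim_{x\to\pm\infty}(w(x)\pm k_0)=0$ uniformly governs the asymptotics below. For real $k\neq0$ let $\phi_{1,2}^{L,R}(x;k)$ be the Jost solutions of $-\psi''+U\psi=k^2\psi$, i.e. the solutions with $\phi_1^L\sim e^{ikx},\ \phi_2^L\sim e^{-ikx}$ as $x\to-\infty$ and $\phi_1^R\sim e^{ikx},\ \phi_2^R\sim e^{-ikx}$ as $x\to+\infty$ (with corresponding asymptotics of derivatives), and let the transfer matrix $M(k)=(M_{ij}(k))$ be defined by $\phi_1^L=M_{11}\phi_1^R+M_{21}\phi_2^R$, $\phi_2^L=M_{12}\phi_1^R+M_{22}\phi_2^R$. Then for every real $k\neq0$, $$(k+k_0)\,M_{22}(k)=(k-k_0)\,\overline{M_{11}(k)},$$ and for every real $k\notin\{0,\pm k_0\}$, $$M_{11}(k)=\overline{M_{22}(k)}\,\frac{k+k_0}{k-k_0},\qquad M_{12}(k)=-\overline{M_{21}(k)}.$$ In particular $M_{22}(k_0)=0$ (a spectral singularity at $k_0$), and if $k_\star\in\mathbb{R}\setminus\{0,\pm k_0\}$ satisfies $M_{22}(k_\star)=0$, then also $M_{11}(k_\star)=0$ (the spectral singularity at $k_\star$ is self-dual).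
   Context: A real $k$ with $M_{22}(k)=0$ is a spectral singularity; it is called self-dual if additionally $M_{11}(k)=0$. Overline denotes complex conjugation. *)

(* classical reals. Complex numbers are modelled as pairs (Re, Im). *)
From Stdlib Require Import Reals.
Open Scope R_scope.

Definition Cx : Type := (R * R)%type.
Definition Cadd (z u : Cx) : Cx := (fst z + fst u, snd z + snd u).
Definition Copp (z : Cx) : Cx := (- fst z, - snd z).
Definition Csub (z u : Cx) : Cx := Cadd z (Copp u).
Definition Cmul (z u : Cx) : Cx :=
  (fst z * fst u - snd z * snd u, fst z * snd u + snd z * fst u).
Definition Cscale (r : R) (z : Cx) : Cx := (r * fst z, r * snd z).
Definition Cconj (z : Cx) : Cx := (fst z, - snd z).
Definition Cnorm (z : Cx) : R := sqrt (fst z * fst z + snd z * snd z).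
Definition C0 : Cx := (0, 0).
Definition Ci : Cx := (0, 1).
Definition Cexpi (t : R) : Cx := (cos t, sin t).

Definition Cderiv (f f' : R -> Cx) : Prop :=
  forall x, derivable_pt_lim (fun t => fst (f t)) x (fst (f' x)) /\
            derivable_pt_lim (fun t => snd (f t)) x (snd (f' x)).

Definition tends0_minf (g : R -> Cx) : Prop :=
  forall eps, 0 < eps -> exists A, forall x, x <= A -> Cnorm (g x) < eps.
Definition tends0_pinf (g : R -> Cx) : Prop :=
  forall eps, 0 < eps -> exists A, forall x, A <= x -> Cnorm (g x) < eps.

Definition rlim_minf (f : R -> R) (l : R) : Prop :=
  forall eps, 0 < eps -> exists A, forall x, x <= A -> Rabs (f x - l) < eps.
Definition rlim_pinf (f : R -> R) (l : R) : Prop :=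
  forall eps, 0 < eps -> exists A, forall x, A <= x -> Rabs (f x - l) < eps.

(* U(x) = - w(x)^2 - i w'(x) + k0^2, with dw the derivative of w *)
Definition Upot (w dw : R -> R) (k0 : R) (x : R) : Cx :=
  (k0 ^ 2 - w x ^ 2, - dw x).

Definition is_sol (U : R -> Cx) (k : R) (f f' : R -> Cx) : Prop :=
  Cderiv f f' /\
  exists f'', Cderiv f' f'' /\
    forall x, Cadd (Copp (f'' x)) (Cmul (U x) (f x)) = Cscale (k ^ 2) (f x).

(* Jost solution normalized at -oo: f ~ e^{i s k x}, f' ~ i s k e^{i s k x}
   (s = 1 gives phi_1, s = -1 gives phi_2). *)
Definition jost_L (U : R -> Cx) (k s : R) (f : R -> Cx) : Prop :=
  exists f', is_sol U k f f' /\
    tends0_minf (fun x => Csub (f x) (Cexpi (s * k * x))) /\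
    tends0_minf (fun x => Csub (f' x) (Cmul (0, s * k) (Cexpi (s * k * x)))).

Definition jost_R (U : R -> Cx) (k s : R) (f : R -> Cx) : Prop :=
  exists f', is_sol U k f f' /\
    tends0_pinf (fun x => Csub (f x) (Cexpi (s * k * x))) /\
    tends0_pinf (fun x => Csub (f' x) (Cmul (0, s * k) (Cexpi (s * k * x)))).

(* The map T f := conj (f' + i w f) sends solutions of -f'' + U f = k^2 f to
   solutions, because U = -w^2 - i w' + k0^2 factorizes the operator up to complex
   conjugation.  Where w tends to w_inf (= k0 at -oo, -k0 at +oo), T turns e^{iskx}
   asymptotically into -i (s k + w_inf) e^{-iskx}.  A solution is determined by its
   asymptotics, since its Wronskians with a bounded fundamental system are constant
   and computed at infinity; hence T phi1L = -i(k+k0) phi2L, T phi1R = -i(k-k0) phi2R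
   and T phi2R = i(k+k0) phi1R.  Applying the antilinear map T to
   phi1L = M11 phi1R + M21 phi2R and comparing with phi2L = M12 phi1R + M22 phi2R in
   the basis (phi1R, phi2R) yields (k+k0) M22 = (k-k0) conj M11 and
   (k+k0) (M12 + conj M21) = 0. *)

From Stdlib Require Import Reals Lra FunctionalExtensionality.
From Coquelicot Require Import Hierarchy Rbar.
From Coquelicot Require Complex.
Open Scope R_scope.

Lemma Cx_eq (z u : Cx) : fst z = fst u -> snd z = snd u -> z = u.
Proof. destruct z, u; simpl; intros -> ->; reflexivity. Qed.

Lemma Csub_eq0 (z u : Cx) : Csub z u = C0 -> z = u.
Proof.
  destruct z, u; unfold Csub, Cadd, Copp, C0; simpl; intros H; injection H as H1 H2.
  f_equal; lra.
Qed.

Ltac componentwise :=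
  apply Cx_eq; unfold Cadd, Csub, Copp, Cmul, Cscale, Cconj, C0, Ci, Cexpi; simpl.

Lemma Cnorm_Cmod (z : Cx) : Cnorm z = Complex.Cmod z.
Proof. unfold Cnorm, Complex.Cmod; f_equal; ring. Qed.

Lemma Cnorm_ge0 (z : Cx) : 0 <= Cnorm z.
Proof. apply sqrt_pos. Qed.

Lemma Cnorm_add (z u : Cx) : Cnorm (Cadd z u) <= Cnorm z + Cnorm u.
Proof. rewrite !Cnorm_Cmod; exact (Complex.Cmod_triangle z u). Qed.

Lemma Cnorm_mul (z u : Cx) : Cnorm (Cmul z u) = Cnorm z * Cnorm u.
Proof. rewrite !Cnorm_Cmod; exact (Complex.Cmod_mult z u). Qed.

Lemma Cnorm_opp (z : Cx) : Cnorm (Copp z) = Cnorm z.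
Proof. rewrite !Cnorm_Cmod; exact (Complex.Cmod_opp z). Qed.

Lemma Cnorm_conj (z : Cx) : Cnorm (Cconj z) = Cnorm z.
Proof. rewrite !Cnorm_Cmod; exact (Complex.Cmod_conj z). Qed.

Lemma Cnorm_eq0 (z : Cx) : Cnorm z = 0 -> z = C0.
Proof. rewrite Cnorm_Cmod; exact (Complex.Cmod_eq_0 z). Qed.

Lemma Cnorm_real (r : R) : Cnorm (r, 0) = Rabs r.
Proof. unfold Cnorm; simpl; rewrite Rmult_0_l, Rplus_0_r; exact (sqrt_Rsqr_abs r). Qed.

Lemma Cnorm_expi (t : R) : Cnorm (Cexpi t) = 1.
Proof. unfold Cnorm, Cexpi; simpl; rewrite <- sqrt_1; f_equal; pose proof (sin2_cos2 t); unfold Rsqr in *; lra. Qed.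

Lemma Cmul_eq0 (z u : Cx) : Cmul z u = C0 -> z = C0 \/ u = C0.
Proof.
  intros H; apply (f_equal Cnorm) in H.
  rewrite Cnorm_mul in H; unfold Cnorm at 3, C0 in H; simpl in H.
  rewrite Rmult_0_l, Rplus_0_r, sqrt_0 in H.
  destruct (Rmult_integral _ _ H); [left | right]; apply Cnorm_eq0; assumption.
Qed.

Lemma Cmul_cancel_r (z u c : Cx) : c <> C0 -> Cmul z c = Cmul u c -> z = u.
Proof.
  intros Hc H.
  assert (Hd : Cmul (Csub z u) c = C0).
  { transitivity (Csub (Cmul z c) (Cmul u c)); [componentwise; ring |].
    rewrite H; componentwise; ring. }
  destruct (Cmul_eq0 _ _ Hd) as [Hzu | Hc0]; [now apply Csub_eq0 | contradiction].
Qed.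

(** * Derivatives of complex-valued functions *)

Lemma Cderiv_ext (f f' g' : R -> Cx) :
  (forall x, f' x = g' x) -> Cderiv f f' -> Cderiv f g'.
Proof. intros E H x; rewrite <- E; exact (H x). Qed.

Lemma Cderiv_congr (f g f' : R -> Cx) :
  (forall x, f x = g x) -> Cderiv f f' -> Cderiv g f'.
Proof. intros E; replace g with f by (now apply functional_extensionality); trivial. Qed.

Lemma Cderiv_const (c : Cx) : Cderiv (fun _ => c) (fun _ => C0).
Proof. intros x; split; apply derivable_pt_lim_const. Qed.

Lemma Cderiv_add (f f' g g' : R -> Cx) : Cderiv f f' -> Cderiv g g' ->
  Cderiv (fun x => Cadd (f x) (g x)) (fun x => Cadd (f' x) (g' x)).
Proof.
  intros Hf Hg x; destruct (Hf x), (Hg x); split; now apply derivable_pt_lim_plus.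
Qed.

Lemma Cderiv_opp (f f' : R -> Cx) :
  Cderiv f f' -> Cderiv (fun x => Copp (f x)) (fun x => Copp (f' x)).
Proof. intros Hf x; destruct (Hf x); split; now apply derivable_pt_lim_opp. Qed.

Lemma Cderiv_conj (f f' : R -> Cx) :
  Cderiv f f' -> Cderiv (fun x => Cconj (f x)) (fun x => Cconj (f' x)).
Proof. intros Hf x; destruct (Hf x); split; [| apply derivable_pt_lim_opp]; assumption. Qed.

Lemma Cderiv_mul (f f' g g' : R -> Cx) : Cderiv f f' -> Cderiv g g' ->
  Cderiv (fun x => Cmul (f x) (g x))
         (fun x => Cadd (Cmul (f' x) (g x)) (Cmul (f x) (g' x))).
Proof.
  intros Hf Hg x; destruct (Hf x) as [Hf1 Hf2], (Hg x) as [Hg1 Hg2]; split; simpl.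
  - replace (fst (f' x) * fst (g x) - snd (f' x) * snd (g x) +
             (fst (f x) * fst (g' x) - snd (f x) * snd (g' x)))
      with (fst (f' x) * fst (g x) + fst (f x) * fst (g' x) -
            (snd (f' x) * snd (g x) + snd (f x) * snd (g' x))) by ring.
    apply derivable_pt_lim_minus; now apply derivable_pt_lim_mult.
  - replace (fst (f' x) * snd (g x) + snd (f' x) * fst (g x) +
             (fst (f x) * snd (g' x) + snd (f x) * fst (g' x)))
      with (fst (f' x) * snd (g x) + fst (f x) * snd (g' x) +
            (snd (f' x) * fst (g x) + snd (f x) * fst (g' x))) by ring.
    apply derivable_pt_lim_plus; now apply derivable_pt_lim_mult.
Qed.

Lemma Cderiv_lincomb (a b : Cx) (f f' g g' : R -> Cx) : Cderiv f f' -> Cderiv g g' ->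
  Cderiv (fun x => Cadd (Cmul a (f x)) (Cmul b (g x)))
         (fun x => Cadd (Cmul a (f' x)) (Cmul b (g' x))).
Proof.
  intros Hf Hg.
  eapply Cderiv_ext;
    [| apply Cderiv_add; apply Cderiv_mul; eauto using Cderiv_const].
  intros x; componentwise; ring.
Qed.

Lemma Cderiv_unique (f f1 f2 : R -> Cx) (x : R) :
  Cderiv f f1 -> Cderiv f f2 -> f1 x = f2 x.
Proof.
  intros H1 H2; destruct (H1 x), (H2 x); apply Cx_eq; eapply uniqueness_limite; eauto.
Qed.

Lemma Cderiv_zero_const (f : R -> Cx) : Cderiv f (fun _ => C0) -> forall x, f x = f 0.
Proof.
  intros H x.
  assert (Hreal : forall h : R -> R, (forall y, derivable_pt_lim h y 0) -> h x = h 0).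
  { intros h Hh.
    exact (null_derivative_1 h (fun y => exist _ 0 (Hh y)) (fun _ => eq_refl) x 0). }
  apply Cx_eq; apply (Hreal (fun t => _ (f t))); intro y; apply (H y).
Qed.

(** * Solutions and Wronskians *)

Lemma is_sol_iff (U : R -> Cx) (k : R) (f f' : R -> Cx) :
  is_sol U k f f' <->
  Cderiv f f' /\ Cderiv f' (fun x => Cmul (Csub (U x) (k ^ 2, 0)) (f x)).
Proof.
  split.
  - intros [Hf [f'' [Hf' Heq]]]; split; [exact Hf |].
    eapply Cderiv_ext; [| exact Hf'].
    intros x; specialize (Heq x).
    apply Cx_eq; [apply (f_equal fst) in Heq | apply (f_equal snd) in Heq];
      unfold Cadd, Copp, Cmul, Cscale, Csub in *; simpl in *; lra.
  - intros [Hf Hf']; split; [exact Hf |].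
    eexists; split; [exact Hf' |]; intros x; componentwise; ring.
Qed.

Lemma is_sol_scale (U : R -> Cx) (k : R) (c : Cx) (f f' : R -> Cx) :
  is_sol U k f f' -> is_sol U k (fun x => Cmul c (f x)) (fun x => Cmul c (f' x)).
Proof.
  rewrite !is_sol_iff; intros [Hf Hf'].
  split; (eapply Cderiv_ext; [| apply Cderiv_mul; [apply Cderiv_const | eassumption]]);
    intros x; componentwise; ring.
Qed.

Definition wronskian (f f' g g' : R -> Cx) (x : R) : Cx :=
  Csub (Cmul (f x) (g' x)) (Cmul (f' x) (g x)).

Lemma wronskian_const (U : R -> Cx) (k : R) (f f' g g' : R -> Cx) :
  is_sol U k f f' -> is_sol U k g g' ->
  forall x, wronskian f f' g g' x = wronskian f f' g g' 0.
Proof.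
  rewrite !is_sol_iff; intros [Hf Hf'] [Hg Hg'].
  apply Cderiv_zero_const; unfold wronskian, Csub.
  eapply Cderiv_ext;
    [| apply Cderiv_add; [| apply Cderiv_opp]; apply Cderiv_mul; eassumption].
  intros x; componentwise; ring.
Qed.

Lemma wronskian_cramer (f f' u1 u1' u2 u2' : R -> Cx) (x : R) :
  Cmul (f x) (wronskian u1 u1' u2 u2' x) =
  Csub (Cmul (wronskian f f' u2 u2' x) (u1 x)) (Cmul (wronskian f f' u1 u1' x) (u2 x)).
Proof. unfold wronskian; componentwise; ring. Qed.

Lemma wronskian_independent (f1 f1' f2 f2' : R -> Cx) (a b : Cx) :
  Cderiv f1 f1' -> Cderiv f2 f2' -> wronskian f1 f1' f2 f2' 0 <> C0 ->
  (forall x, Cadd (Cmul a (f1 x)) (Cmul b (f2 x)) = C0) -> a = C0 /\ b = C0.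
Proof.
  intros Hf1 Hf2 HW Hcomb.
  assert (Hderiv : Cadd (Cmul a (f1' 0)) (Cmul b (f2' 0)) = C0).
  { apply (Cderiv_unique _ _ (fun _ => C0) 0 (Cderiv_lincomb a b _ _ _ _ Hf1 Hf2)).
    apply (Cderiv_congr (fun _ => C0)); [intros x; now rewrite Hcomb | apply Cderiv_const]. }
  split; apply (Cmul_cancel_r _ _ _ HW).
  - transitivity (Csub (Cmul (f2' 0) (Cadd (Cmul a (f1 0)) (Cmul b (f2 0))))
                       (Cmul (f2 0) (Cadd (Cmul a (f1' 0)) (Cmul b (f2' 0))))).
    + unfold wronskian; componentwise; ring.
    + rewrite Hcomb, Hderiv; componentwise; ring.
  - transitivity (Csub (Cmul (f1 0) (Cadd (Cmul a (f1' 0)) (Cmul b (f2' 0))))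
                       (Cmul (f1' 0) (Cadd (Cmul a (f1 0)) (Cmul b (f2 0))))).
    + unfold wronskian; componentwise; ring.
    + rewrite Hcomb, Hderiv; componentwise; ring.
Qed.

(** * The Darboux map *)

Definition darboux (w : R -> R) (f f' : R -> Cx) (x : R) : Cx :=
  Cconj (Cadd (f' x) (Cmul (0, w x) (f x))).

(* The derivative of [darboux w f f'] when f is a solution, with f'' eliminated. *)
Definition darboux_deriv (w : R -> R) (k0 k : R) (f f' : R -> Cx) (x : R) : Cx :=
  Cconj (Cadd (Cmul (k0 ^ 2 - k ^ 2 - w x * w x, 0) (f x)) (Cmul (0, w x) (f' x))).

Lemma darboux_is_sol (w dw : R -> R) (k0 k : R) (f f' : R -> Cx) :
  (forall x, derivable_pt_lim w x (dw x)) ->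
  is_sol (Upot w dw k0) k f f' ->
  is_sol (Upot w dw k0) k (darboux w f f') (darboux_deriv w k0 k f f').
Proof.
  intros Hw; rewrite !is_sol_iff; intros [Hf Hf'].
  assert (Hiw : Cderiv (fun x => (0, w x)) (fun x => (0, dw x))).
  { intros x; split; [apply derivable_pt_lim_const | apply Hw]. }
  assert (Hq : Cderiv (fun x => (k0 ^ 2 - k ^ 2 - w x * w x, 0))
                      (fun x => (0 - (dw x * w x + w x * dw x), 0))).
  { intros x; split; [| apply derivable_pt_lim_const].
    apply derivable_pt_lim_minus; [apply derivable_pt_lim_const |].
    apply derivable_pt_lim_mult; apply Hw. }
  split.
  - eapply Cderiv_ext;
      [| apply Cderiv_conj, Cderiv_add; [exact Hf' | apply Cderiv_mul; eassumption]].
    intros x; unfold darboux_deriv, Upot; componentwise; ring.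
  - eapply Cderiv_ext;
      [| apply Cderiv_conj, Cderiv_add; apply Cderiv_mul; eassumption].
    intros x; unfold darboux, Upot; componentwise; ring.
Qed.

Lemma darboux_lincomb (w : R -> R) (a b : Cx) (f f' g1 g1' g2 g2' : R -> Cx) :
  Cderiv f f' -> Cderiv g1 g1' -> Cderiv g2 g2' ->
  (forall x, f x = Cadd (Cmul a (g1 x)) (Cmul b (g2 x))) ->
  forall x, darboux w f f' x =
            Cadd (Cmul (Cconj a) (darboux w g1 g1' x)) (Cmul (Cconj b) (darboux w g2 g2' x)).
Proof.
  intros Hf Hg1 Hg2 E x.
  assert (E' : f' x = Cadd (Cmul a (g1' x)) (Cmul b (g2' x))).
  { apply (Cderiv_unique f _ (fun y => Cadd (Cmul a (g1' y)) (Cmul b (g2' y))) x Hf).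
    apply (Cderiv_congr (fun y => Cadd (Cmul a (g1 y)) (Cmul b (g2 y)))).
    - intros y; symmetry; apply E.
    - now apply Cderiv_lincomb. }
  unfold darboux; rewrite E, E'; componentwise; ring.
Qed.

(** * Asymptotics along a filter *)

Section Asymptotics.

Context {F : (R -> Prop) -> Prop} {FF : ProperFilter F}.

Definition vanishing (g : R -> Cx) : Prop :=
  forall eps, 0 < eps -> F (fun x => Cnorm (g x) < eps).

Definition bounded (g : R -> Cx) : Prop := exists c, F (fun x => Cnorm (g x) <= c).

Lemma vanishing_ext (g h : R -> Cx) : (forall x, g x = h x) -> vanishing h -> vanishing g.
Proof.
  intros E H eps Heps; eapply filter_imp; [| exact (H eps Heps)].
  intros x; rewrite E; trivial.
Qed.

Lemma bounded_ext (g h : R -> Cx) : (forall x, g x = h x) -> bounded h -> bounded g.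
Proof.
  intros E [c H]; exists c; eapply filter_imp; [| exact H].
  intros x; rewrite E; trivial.
Qed.

Lemma vanishing_zero : vanishing (fun _ => C0).
Proof.
  intros eps Heps; apply filter_forall; intros _.
  unfold Cnorm, C0; simpl; rewrite Rmult_0_l, Rplus_0_r, sqrt_0; exact Heps.
Qed.

Lemma vanishing_add (g h : R -> Cx) :
  vanishing g -> vanishing h -> vanishing (fun x => Cadd (g x) (h x)).
Proof.
  intros Hg Hh eps Heps.
  eapply filter_imp; [| apply filter_and; [apply (Hg (eps / 2)) | apply (Hh (eps / 2))]];
    [| lra | lra].
  intros x [H1 H2]; pose proof (Cnorm_add (g x) (h x)); lra.
Qed.

Lemma vanishing_opp (g : R -> Cx) : vanishing g -> vanishing (fun x => Copp (g x)).
Proof.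
  intros Hg eps Heps; eapply filter_imp; [| exact (Hg eps Heps)].
  intros x; rewrite Cnorm_opp; trivial.
Qed.

Lemma vanishing_conj (g : R -> Cx) : vanishing g -> vanishing (fun x => Cconj (g x)).
Proof.
  intros Hg eps Heps; eapply filter_imp; [| exact (Hg eps Heps)].
  intros x; rewrite Cnorm_conj; trivial.
Qed.

Lemma vanishing_mulr (g h : R -> Cx) :
  vanishing g -> bounded h -> vanishing (fun x => Cmul (g x) (h x)).
Proof.
  intros Hg [c Hh] eps Heps.
  set (c' := Rabs c + 1).
  assert (Hc' : 0 < c') by (unfold c'; pose proof (Rabs_pos c); lra).
  eapply filter_imp;
    [| apply filter_and; [apply (Hg (eps / c')) | exact Hh]];
    [| apply Rdiv_lt_0_compat; assumption].
  intros x [H1 H2]; rewrite Cnorm_mul.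
  assert (Hcc : c <= c') by (unfold c'; pose proof (Rle_abs c); lra).
  apply Rle_lt_trans with (Cnorm (g x) * c').
  - apply Rmult_le_compat_l; [apply Cnorm_ge0 | lra].
  - apply (Rmult_lt_compat_r c') in H1; [| exact Hc'].
    unfold Rdiv in H1; rewrite Rmult_assoc, Rinv_l, Rmult_1_r in H1; lra.
Qed.

Lemma vanishing_mull (g h : R -> Cx) :
  bounded g -> vanishing h -> vanishing (fun x => Cmul (g x) (h x)).
Proof.
  intros Hg Hh; eapply vanishing_ext; [| exact (vanishing_mulr h g Hh Hg)].
  intros x; componentwise; ring.
Qed.

Lemma bounded_const (c : Cx) : bounded (fun _ => c).
Proof. exists (Cnorm c); apply filter_forall; intros _; apply Rle_refl. Qed.

Lemma bounded_add (g h : R -> Cx) :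
  bounded g -> bounded h -> bounded (fun x => Cadd (g x) (h x)).
Proof.
  intros [c Hg] [d Hh]; exists (c + d).
  eapply filter_imp; [| exact (filter_and _ _ Hg Hh)].
  intros x [H1 H2]; pose proof (Cnorm_add (g x) (h x)); lra.
Qed.

Lemma bounded_mul (g h : R -> Cx) :
  bounded g -> bounded h -> bounded (fun x => Cmul (g x) (h x)).
Proof.
  intros [c Hg] [d Hh]; exists (c * d).
  eapply filter_imp; [| exact (filter_and _ _ Hg Hh)].
  intros x [H1 H2]; rewrite Cnorm_mul.
  apply Rmult_le_compat; auto using Cnorm_ge0.
Qed.

Lemma vanishing_bounded (g : R -> Cx) : vanishing g -> bounded g.
Proof.
  intros Hg; exists 1; eapply filter_imp; [| apply (Hg 1 Rlt_0_1)].
  intros x; apply Rlt_le.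
Qed.

Lemma bounded_approx (g a : R -> Cx) :
  vanishing (fun x => Csub (g x) (a x)) -> bounded a -> bounded g.
Proof.
  intros Hga Ha.
  eapply bounded_ext; [| exact (bounded_add _ _ (vanishing_bounded _ Hga) Ha)].
  intros x; componentwise; ring.
Qed.

Lemma vanishing_const (c : Cx) : vanishing (fun _ => c) -> c = C0.
Proof.
  intros Hc; apply Cnorm_eq0.
  apply Rle_antisym; [| apply Cnorm_ge0].
  apply Rnot_lt_le; intros Hpos.
  destruct (filter_ex _ (Hc _ Hpos)) as [x Hx]; lra.
Qed.

Lemma bounded_expi (r : R -> R) : bounded (fun x => Cexpi (r x)).
Proof. exists 1; apply filter_forall; intros x; rewrite Cnorm_expi; apply Rle_refl. Qed.

Lemma wronskian_sub_vanishing (f f' g g' a a' b b' : R -> Cx) :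
  vanishing (fun x => Csub (f x) (a x)) -> vanishing (fun x => Csub (f' x) (a' x)) ->
  vanishing (fun x => Csub (g x) (b x)) -> vanishing (fun x => Csub (g' x) (b' x)) ->
  bounded a -> bounded a' -> bounded b -> bounded b' ->
  vanishing (fun x => Csub (wronskian f f' g g' x) (wronskian a a' b b' x)).
Proof.
  intros Hf Hf' Hg Hg' Ha Ha' Hb Hb'.
  assert (Bg := bounded_approx _ _ Hg Hb).
  assert (Bg' := bounded_approx _ _ Hg' Hb').
  eapply vanishing_ext;
    [| apply vanishing_add; [apply vanishing_add | apply vanishing_opp; apply vanishing_add]].
  2: exact (vanishing_mulr _ _ Hf Bg').
  2: exact (vanishing_mull _ _ Ha Hg').
  2: exact (vanishing_mulr _ _ Hf' Bg).
  2: exact (vanishing_mull _ _ Ha' Hg).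
  intros x; unfold wronskian; componentwise; ring.
Qed.

Lemma wronskian_eq_of_asymptotic (U : R -> Cx) (k : R) (f f' g g' a a' b b' : R -> Cx)
    (c : Cx) :
  is_sol U k f f' -> is_sol U k g g' ->
  vanishing (fun x => Csub (f x) (a x)) -> vanishing (fun x => Csub (f' x) (a' x)) ->
  vanishing (fun x => Csub (g x) (b x)) -> vanishing (fun x => Csub (g' x) (b' x)) ->
  bounded a -> bounded a' -> bounded b -> bounded b' ->
  (forall x, wronskian a a' b b' x = c) ->
  forall x, wronskian f f' g g' x = c.
Proof.
  intros Hf Hg Hfa Hfa' Hgb Hgb' Ha Ha' Hb Hb' Hc x.
  assert (Hdiff : Csub (wronskian f f' g g' 0) c = C0).
  { apply vanishing_const; eapply vanishing_ext;
      [| exact (wronskian_sub_vanishing _ _ _ _ _ _ _ _ Hfa Hfa' Hgb Hgb' Ha Ha' Hb Hb')].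
    intros y; cbv beta; rewrite (wronskian_const U k f f' g g' Hf Hg y), Hc; reflexivity. }
  rewrite (wronskian_const U k f f' g g' Hf Hg x); now apply Csub_eq0.
Qed.

Lemma sol_eq_of_asymptotic (U : R -> Cx) (k : R) (f f' g g' u1 u1' u2 u2' : R -> Cx) :
  is_sol U k f f' -> is_sol U k g g' -> is_sol U k u1 u1' -> is_sol U k u2 u2' ->
  bounded g -> bounded g' -> bounded u1 -> bounded u1' -> bounded u2 -> bounded u2' ->
  wronskian u1 u1' u2 u2' 0 <> C0 ->
  vanishing (fun x => Csub (f x) (g x)) -> vanishing (fun x => Csub (f' x) (g' x)) ->
  forall x, f x = g x.
Proof.
  intros Hf Hg Hu1 Hu2 Bg Bg' Bu1 Bu1' Bu2 Bu2' HW Hfg Hfg' x.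
  assert (Hself : forall u : R -> Cx, vanishing (fun x => Csub (u x) (u x))).
  { intros u; eapply vanishing_ext; [| exact vanishing_zero].
    intros y; componentwise; ring. }
  assert (Hsame : forall u u', is_sol U k u u' -> bounded u -> bounded u' ->
                  wronskian f f' u u' x = wronskian g g' u u' x).
  { intros u u' Hu Bu Bu'.
    rewrite (wronskian_const U k g g' u u' Hg Hu x).
    apply (wronskian_eq_of_asymptotic U k f f' u u' g g' u u'); auto.
    intros y; exact (wronskian_const U k g g' u u' Hg Hu y). }
  apply (Cmul_cancel_r _ _ (wronskian u1 u1' u2 u2' x)).
  - rewrite (wronskian_const U k u1 u1' u2 u2' Hu1 Hu2 x); exact HW.
  - rewrite (wronskian_cramer f f'), (wronskian_cramer g g').
    now rewrite (Hsame u1 u1'), (Hsame u2 u2').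
Qed.

Lemma darboux_asymptotic (w : R -> R) (k0 k winf s s' : R) (f f' : R -> Cx) :
  (s = 1 \/ s = -1) -> s' = - s -> winf ^ 2 = k0 ^ 2 ->
  vanishing (fun x => (w x - winf, 0)) ->
  vanishing (fun x => Csub (f x) (Cexpi (s * k * x))) ->
  vanishing (fun x => Csub (f' x) (Cmul (0, s * k) (Cexpi (s * k * x)))) ->
  vanishing (fun x => Csub (darboux w f f' x)
                           (Cmul (0, - (s * k + winf)) (Cexpi (s' * k * x)))) /\
  vanishing (fun x => Csub (darboux_deriv w k0 k f f' x)
                           (Cmul (0, - (s * k + winf)) (Cmul (0, s' * k) (Cexpi (s' * k * x))))).
Proof.
  intros Hs Hs' Hwinf Hw Hf Hf'.
  assert (Ba : bounded (fun x => Cexpi (s * k * x))) by apply bounded_expi.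
  assert (Bw : bounded (fun x => (w x, 0))).
  { apply (bounded_approx _ (fun _ => (winf, 0))); [| apply bounded_const].
    eapply vanishing_ext; [| exact Hw]; intros x; componentwise; ring. }
  assert (Biw : bounded (fun x => (0, w x))).
  { eapply bounded_ext; [| exact (bounded_mul _ _ (bounded_const Ci) Bw)].
    intros x; componentwise; ring. }
  assert (Bq : bounded (fun x => (k0 ^ 2 - k ^ 2 - w x * w x, 0))).
  { eapply bounded_ext;
      [| exact (bounded_add _ _ (bounded_const (k0 ^ 2 - k ^ 2, 0))
                  (bounded_mul _ _ (bounded_const (-1, 0)) (bounded_mul _ _ Bw Bw)))].
    intros x; componentwise; ring. }
  assert (Bsum : bounded (fun x => (w x + winf + s * k, 0))).
  { eapply bounded_ext; [| exact (bounded_add _ _ Bw (bounded_const (winf + s * k, 0)))].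
    intros x; componentwise; ring. }
  assert (Hexp : forall x, Cexpi (s' * k * x) = Cconj (Cexpi (s * k * x))).
  { intros x; subst s'; unfold Cexpi, Cconj; simpl.
    replace (- s * k * x) with (- (s * k * x)) by ring; now rewrite cos_neg, sin_neg. }
  split.
  - eapply vanishing_ext;
      [| apply vanishing_conj, vanishing_add; [exact Hf' | apply vanishing_add]].
    2: exact (vanishing_mull _ _ Biw Hf).
    2: exact (vanishing_mulr _ _ (vanishing_mull _ _ (bounded_const Ci) Hw) Ba).
    intros x; rewrite Hexp; subst s'; unfold darboux; componentwise; ring.
  - eapply vanishing_ext;
      [| apply vanishing_conj, vanishing_add; [| apply vanishing_add]].
    2: exact (vanishing_mull _ _ Bq Hf).
    2: exact (vanishing_mull _ _ Biw Hf').
    2: exact (vanishing_mulr _ _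
                (vanishing_mull _ _ (bounded_const (-1, 0)) (vanishing_mulr _ _ Hw Bsum)) Ba).
    intros x; unfold darboux_deriv; rewrite Hexp, <- Hwinf; subst s'.
    destruct Hs as [-> | ->]; componentwise; ring.
Qed.

Definition jost_at (U : R -> Cx) (k s : R) (f f' : R -> Cx) : Prop :=
  is_sol U k f f' /\
  vanishing (fun x => Csub (f x) (Cexpi (s * k * x))) /\
  vanishing (fun x => Csub (f' x) (Cmul (0, s * k) (Cexpi (s * k * x)))).

Lemma jost_bounded (U : R -> Cx) (k s : R) (f f' : R -> Cx) :
  jost_at U k s f f' -> bounded f /\ bounded f'.
Proof.
  intros [_ [Hf Hf']]; split.
  - exact (bounded_approx _ _ Hf (bounded_expi _)).
  - exact (bounded_approx _ _ Hf' (bounded_mul _ _ (bounded_const _) (bounded_expi _))).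
Qed.

Lemma jost_wronskian (U : R -> Cx) (k s s' : R) (f f' g g' : R -> Cx) :
  s' = - s -> jost_at U k s f f' -> jost_at U k s' g g' ->
  wronskian f f' g g' 0 = (0, -2 * s * k).
Proof.
  intros Hs' [Hf [Hf0 Hf1]] [Hg [Hg0 Hg1]].
  apply (wronskian_eq_of_asymptotic U k f f' g g'
           (fun x => Cexpi (s * k * x)) (fun x => Cmul (0, s * k) (Cexpi (s * k * x)))
           (fun x => Cexpi (s' * k * x)) (fun x => Cmul (0, s' * k) (Cexpi (s' * k * x))));
    auto using bounded_expi, bounded_mul, bounded_const.
  intros x; subst s'; unfold wronskian.
  replace (- s * k * x) with (- (s * k * x)) by ring.
  unfold Cexpi; rewrite cos_neg, sin_neg.
  pose proof (sin2_cos2 (s * k * x)) as Hpyth; unfold Rsqr in Hpyth.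
  componentwise; [ring |].
  transitivity (-2 * s * k * (sin (s * k * x) * sin (s * k * x) +
                              cos (s * k * x) * cos (s * k * x))); [ring |].
  rewrite Hpyth; ring.
Qed.

Lemma jost_wronskian_neq0 (U : R -> Cx) (k s s' : R) (f f' g g' : R -> Cx) :
  s <> 0 -> k <> 0 -> s' = - s -> jost_at U k s f f' -> jost_at U k s' g g' ->
  wronskian f f' g g' 0 <> C0.
Proof.
  intros Hs Hk Hs' Jf Jg; rewrite (jost_wronskian U k s s' f f' g g' Hs' Jf Jg).
  intros H; apply (f_equal snd) in H; simpl in H.
  assert (s * k <> 0) by now apply Rmult_integral_contrapositive_currified.
  lra.
Qed.

Lemma darboux_jost (w dw : R -> R) (k0 k winf s s' : R) (f f' g g' : R -> Cx) :
  (forall x, derivable_pt_lim w x (dw x)) -> k <> 0 ->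
  (s = 1 \/ s = -1) -> s' = - s -> winf ^ 2 = k0 ^ 2 ->
  vanishing (fun x => (w x - winf, 0)) ->
  jost_at (Upot w dw k0) k s f f' -> jost_at (Upot w dw k0) k s' g g' ->
  forall x, darboux w f f' x = Cmul (0, - (s * k + winf)) (g x).
Proof.
  intros Hw Hk Hs Hs' Hwinf Hwlim Jf Jg.
  set (b := (0, - (s * k + winf)) : Cx).
  pose proof Jf as [Sf [Hf Hf']]; pose proof Jg as [Sg [Hg Hg']].
  destruct (darboux_asymptotic w k0 k winf s s' f f' Hs Hs' Hwinf Hwlim Hf Hf') as [Tf Tf'].
  destruct (jost_bounded _ _ _ _ _ Jf) as [Bf Bf'].
  destruct (jost_bounded _ _ _ _ _ Jg) as [Bg Bg'].
  apply (sol_eq_of_asymptotic (Upot w dw k0) k _ (darboux_deriv w k0 k f f')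
           _ (fun x => Cmul b (g' x)) f f' g g');
    auto using darboux_is_sol, is_sol_scale, bounded_mul, bounded_const.
  - apply (jost_wronskian_neq0 (Upot w dw k0) k s s' f f' g g'); auto.
    destruct Hs as [-> | ->]; lra.
  - eapply vanishing_ext;
      [| exact (vanishing_add _ _ Tf (vanishing_mull _ _ (bounded_const (Copp b)) Hg))].
    intros x; componentwise; ring.
  - eapply vanishing_ext;
      [| exact (vanishing_add _ _ Tf' (vanishing_mull _ _ (bounded_const (Copp b)) Hg'))].
    intros x; componentwise; ring.
Qed.

End Asymptotics.

Lemma tends0_minf_vanishing (g : R -> Cx) :
  tends0_minf g -> vanishing (F := Rbar_locally m_infty) g.
Proof.
  intros H eps Heps; destruct (H eps Heps) as [A HA].
  exists A; intros x Hx; apply HA; lra.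
Qed.

Lemma tends0_pinf_vanishing (g : R -> Cx) :
  tends0_pinf g -> vanishing (F := Rbar_locally p_infty) g.
Proof.
  intros H eps Heps; destruct (H eps Heps) as [A HA].
  exists A; intros x Hx; apply HA; lra.
Qed.

Lemma rlim_minf_vanishing (w : R -> R) (l : R) :
  rlim_minf w l -> vanishing (F := Rbar_locally m_infty) (fun x => (w x - l, 0)).
Proof.
  intros H; apply tends0_minf_vanishing; intros eps Heps.
  destruct (H eps Heps) as [A HA]; exists A; intros x Hx; rewrite Cnorm_real; auto.
Qed.

Lemma rlim_pinf_vanishing (w : R -> R) (l : R) :
  rlim_pinf w l -> vanishing (F := Rbar_locally p_infty) (fun x => (w x - l, 0)).
Proof.
  intros H; apply tends0_pinf_vanishing; intros eps Heps.
  destruct (H eps Heps) as [A HA]; exists A; intros x Hx; rewrite Cnorm_real; auto.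
Qed.

Lemma jost_L_at (U : R -> Cx) (k s : R) (f : R -> Cx) :
  jost_L U k s f -> exists f', jost_at (F := Rbar_locally m_infty) U k s f f'.
Proof.
  intros [f' [Hsol [Hf Hf']]]; exists f'.
  split; [exact Hsol | split; now apply tends0_minf_vanishing].
Qed.

Lemma jost_R_at (U : R -> Cx) (k s : R) (f : R -> Cx) :
  jost_R U k s f -> exists f', jost_at (F := Rbar_locally p_infty) U k s f f'.
Proof.
  intros [f' [Hsol [Hf Hf']]]; exists f'.
  split; [exact Hsol | split; now apply tends0_pinf_vanishing].
Qed.

Lemma transfer_symmetries (k0 k : R) (M11 M12 M21 M22 : Cx) :
  0 < k0 ->
  Cscale (k + k0) M22 = Cscale (k - k0) (Cconj M11) ->
  Cscale (k + k0) (Cadd M12 (Cconj M21)) = C0 ->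
  Cscale (k + k0) M22 = Cscale (k - k0) (Cconj M11) /\
  (k <> k0 -> k <> - k0 ->
     M11 = Cscale ((k + k0) / (k - k0)) (Cconj M22) /\ M12 = Copp (Cconj M21)) /\
  (k = k0 -> M22 = C0) /\
  (k <> k0 -> k <> - k0 -> M22 = C0 -> M11 = C0).
Proof.
  destruct M11 as [u v], M12 as [m1 m2], M21 as [p q], M22 as [x y].
  unfold Cscale, Cconj, Cadd, Copp, C0; simpl.
  intros Hk0 H22 H12; injection H22 as H22a H22b; injection H12 as H12a H12b.
  split; [f_equal; assumption |].
  split; [| split].
  - intros Hk1 Hk2.
    assert (Hm : k - k0 <> 0) by lra; assert (Hp : k + k0 <> 0) by lra.
    split; f_equal.
    + apply (Rmult_eq_reg_l (k - k0)); [| exact Hm].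
      field_simplify; [lra | exact Hm].
    + apply (Rmult_eq_reg_l (k - k0)); [| exact Hm].
      field_simplify; [lra | exact Hm].
    + destruct (Rmult_integral _ _ H12a); [contradiction | lra].
    + destruct (Rmult_integral _ _ H12b); [contradiction | lra].
  - intros ->; f_equal.
    + assert (H : (k0 + k0) * x = 0) by lra; destruct (Rmult_integral _ _ H); lra.
    + assert (H : (k0 + k0) * y = 0) by lra; destruct (Rmult_integral _ _ H); lra.
  - intros Hk1 Hk2 Hxy; injection Hxy as -> ->.
    assert (Hm : k - k0 <> 0) by lra; f_equal.
    + assert (H : (k - k0) * u = 0) by lra.
      destruct (Rmult_integral _ _ H); [contradiction | assumption].
    + assert (H : (k - k0) * v = 0) by lra.
      destruct (Rmult_integral _ _ H); [contradiction | assumption].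
Qed.

(* The Jost solutions are given. *)
Theorem mainTheorem5
  (k0 : R) (w dw d2w : R -> R)
  (Hk0 : 0 < k0)
  (Hdw : forall x, derivable_pt_lim w x (dw x))
  (Hd2w : forall x, derivable_pt_lim dw x (d2w x))
  (Hcont : continuity d2w)
  (Hlimm : rlim_minf w k0)
  (Hlimp : rlim_pinf w (- k0))
  (Hint : exists B : R, forall (a b : R)
      (pr : Riemann_integrable
              (fun x => (1 + Rabs x) * Cnorm (Upot w dw k0 x)) a b),
      RiemannInt pr <= B)
  (k : R) (Hk : k <> 0)
  (phi1L phi2L phi1R phi2R : R -> Cx)
  (H1L : jost_L (Upot w dw k0) k 1 phi1L)
  (H2L : jost_L (Upot w dw k0) k (-1) phi2L)
  (H1R : jost_R (Upot w dw k0) k 1 phi1R)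
  (H2R : jost_R (Upot w dw k0) k (-1) phi2R)
  (M11 M12 M21 M22 : Cx)
  (HM1 : forall x, phi1L x = Cadd (Cmul M11 (phi1R x)) (Cmul M21 (phi2R x)))
  (HM2 : forall x, phi2L x = Cadd (Cmul M12 (phi1R x)) (Cmul M22 (phi2R x))) :
  Cscale (k + k0) M22 = Cscale (k - k0) (Cconj M11) /\
  (k <> k0 -> k <> - k0 ->
     M11 = Cscale ((k + k0) / (k - k0)) (Cconj M22) /\ M12 = Copp (Cconj M21)) /\
  (k = k0 -> M22 = C0) /\
  (k <> k0 -> k <> - k0 -> M22 = C0 -> M11 = C0).
Proof.
  destruct (jost_L_at _ _ _ _ H1L) as [q1L J1L].
  destruct (jost_L_at _ _ _ _ H2L) as [q2L J2L].
  destruct (jost_R_at _ _ _ _ H1R) as [q1R J1R].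
  destruct (jost_R_at _ _ _ _ H2R) as [q2R J2R].
  assert (Hwm := rlim_minf_vanishing _ _ Hlimm).
  assert (Hwp := rlim_pinf_vanishing _ _ Hlimp).
  assert (T1L := darboux_jost w dw k0 k k0 1 (-1) _ _ _ _ Hdw Hk
                   (or_introl eq_refl) ltac:(lra) eq_refl Hwm J1L J2L).
  assert (T1R := darboux_jost w dw k0 k (- k0) 1 (-1) _ _ _ _ Hdw Hk
                   (or_introl eq_refl) ltac:(lra) ltac:(ring) Hwp J1R J2R).
  assert (T2R := darboux_jost w dw k0 k (- k0) (-1) 1 _ _ _ _ Hdw Hk
                   (or_intror eq_refl) ltac:(lra) ltac:(ring) Hwp J2R J1R).
  assert (W := jost_wronskian_neq0 _ k 1 (-1) _ _ _ _ ltac:(lra) Hk ltac:(lra) J1R J2R).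
  destruct J1L as [[D1L _] _]; destruct J1R as [[D1R _] _]; destruct J2R as [[D2R _] _].
  assert (T1L' := darboux_lincomb w M11 M21 _ _ _ _ _ _ D1L D1R D2R HM1).
  destruct (wronskian_independent phi1R q1R phi2R q2R
              (Cscale (k + k0) (Cadd M12 (Cconj M21)))
              (Csub (Cscale (k + k0) M22) (Cscale (k - k0) (Cconj M11))) D1R D2R W)
    as [H12 H22].
  - intros x.
    transitivity (Cmul Ci (Csub (Cmul (0, - (1 * k + k0)) (phi2L x)) (darboux w phi1L q1L x))).
    + rewrite (HM2 x), (T1L' x), (T1R x), (T2R x); componentwise; ring.
    + rewrite (T1L x); componentwise; ring.
  - apply transfer_symmetries; [exact Hk0 | now apply Csub_eq0 | exact H12].
Qed.
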